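(* Let $n\neq 0$ be an integer and let $K$ be a bicolored $n$-Eulerian cubical complex. Then the same number of vertices of $K$ are assigned each of the two colors; in particular $K$ has an even number of vertices.
   Context: A cubical poset is a poset $P$ in which every order ideal $\{z\in P: z\le x\}$ is isomorphic to a product of copies of $I$, where $I$ is the three-element face poset of an interval with the empty face excluded. A cubical complex is a (regular) cell complex whose face poset $P$ (excluding the empty face) is a cubical poset such that $P$ with a minimum and maximum adjoined is a lattice. A bicoloring assigns to each vertex one of two colors so that every edge has one endpoint of each color. The link of a vertex $v$ is the poset of faces strictly containing $v$; its Euler characteristic is the alternating sum $\sum_{i\ge 1}(-1)^{i-1}(\text{number of } i\text{-dimensional faces of } K \text{ containing } v)$. The complex $K$ is $n$-Eulerian if the link of every vertex has Euler characteristic $n$. *)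

(* Cubical complexes are modelled combinatorially by their
   (finite) face poset, as in the paper's definition. *)
From mathcomp Require Import all_boot all_order all_algebra.
Set Implicit Arguments. Unset Strict Implicit. Unset Printing Implicit Defensive.
Import GRing.Theory Num.Theory.

(* The face poset I of an interval (empty face excluded): elements 0, 1
   (the two endpoints) and 2 (the whole segment), with 0 < 2 and 1 < 2. *)
Definition I_le (a b : 'I_3) : bool := (a == b) || (val b == 2).

Definition cube_le (d : nat) (u w : {ffun 'I_d -> 'I_3}) : bool :=
  [forall i, I_le (u i) (w i)].

Definition is_partial_order (T : finType) (le : rel T) : Prop :=
  reflexive le /\ antisymmetric le /\ transitive le.

Definition cubical_poset (T : finType) (le : rel T) : Prop :=
  is_partial_order le /\
  forall x : T, exists (d : nat) (f : {ffun 'I_d -> 'I_3} -> T),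
    [/\ injective f,
        (forall u, le (f u) x),
        (forall z, le z x -> exists u, f u = z) &
        (forall u w, le (f u) (f w) = cube_le u w)].

(* P with a minimum and a maximum adjoined is a lattice: any two elements
   with a common upper (resp. lower) bound in P have a least upper
   (resp. greatest lower) bound in P. *)
Definition hat_lattice (T : finType) (le : rel T) : Prop :=
  forall x y : T,
    ((exists z, le x z /\ le y z) ->
       exists z, [/\ le x z, le y z & forall w, le x w -> le y w -> le z w]) /\
    ((exists z, le z x /\ le z y) ->
       exists z, [/\ le z x, le z y & forall w, le w x -> le w y -> le w z]).

Definition cubical_complex (T : finType) (le : rel T) : Prop :=
  cubical_poset le /\ hat_lattice le.

(* Dimension of a face x: the d with {z <= x} ~ I^d, i.e. #{z <= x} = 3^d. *)
Definition face_dim (T : finType) (le : rel T) (x : T) : nat :=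
  trunc_log 3 #|[pred z | le z x]|.

Definition is_vertex (T : finType) (le : rel T) (v : T) : bool :=
  face_dim le v == 0.

Definition is_edge (T : finType) (le : rel T) (e : T) : bool :=
  face_dim le e == 1.

Definition bicoloring (T : finType) (le : rel T) (c : T -> bool) : Prop :=
  forall e v w : T, is_edge le e -> is_vertex le v -> is_vertex le w ->
    le v e -> le w e -> v != w -> c v != c w.

Definition link_euler (T : finType) (le : rel T) (v : T) : int :=
  (\sum_(y : T | le v y && (y != v)) (-1) ^+ (face_dim le y).-1)%R.

Definition eulerian (T : finType) (le : rel T) (n : int) : Prop :=
  forall v : T, is_vertex le v -> link_euler le v = n.

(* Summing the Euler characteristics of the links over the vertices of one
   colour gives n times the number of such vertices.  Exchanging the two sums,
   the same quantity is a signed sum, over all faces y, of the number of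
   vertices of that colour strictly below y.  Every face of positive dimension
   is a cube I^d, d > 0, whose vertices are the {0,1}-words; flipping the first
   letter moves along an edge, hence swaps the colours, so each cube has as
   many vertices of one colour as of the other.  The two signed sums agree,
   and n <> 0 can be cancelled. *)
From mathcomp Require Import all_boot all_order all_algebra.
Set Implicit Arguments. Unset Strict Implicit. Unset Printing Implicit Defensive.
Import GRing.Theory Num.Theory.

Definition I_flip (k : 'I_3) : 'I_3 :=
  match val k with
  | 0 => Ordinal (isT : 1 < 3)
  | 1 => Ordinal (isT : 0 < 3)
  | _ => k
  end.

Lemma I_flipK : involutive I_flip.
Proof. by case=> [[|[|[|m]]] lt_k3] //; apply: val_inj. Qed.

Lemma I_flip_eq2 k : (val (I_flip k) == 2) = (val k == 2).
Proof. by case: k => [[|[|[|m]]] lt_k3]. Qed.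

Lemma I_flip_neq k : val k != 2 -> I_flip k != k.
Proof. by case: k => [[|[|[|m]]] lt_k3]. Qed.

Definition cube_vertex d (u : {ffun 'I_d -> 'I_3}) : bool :=
  [forall i, val (u i) != 2].

Definition set_first d (u : {ffun 'I_d.+1 -> 'I_3}) (k : 'I_3) :
  {ffun 'I_d.+1 -> 'I_3} :=
  [ffun i => if i == ord0 then k else u i].

Definition flip_first d (u : {ffun 'I_d.+1 -> 'I_3}) : {ffun 'I_d.+1 -> 'I_3} :=
  set_first u (I_flip (u ord0)).

Lemma set_first_inj d (u : {ffun 'I_d.+1 -> 'I_3}) : injective (set_first u).
Proof. by move=> k k' /ffunP /(_ ord0); rewrite !ffunE eqxx. Qed.

Lemma set_first_id d (u : {ffun 'I_d.+1 -> 'I_3}) : set_first u (u ord0) = u.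
Proof. by apply/ffunP => i; rewrite ffunE; case: (i =P ord0) => [->|]. Qed.

Lemma flip_firstK d : involutive (@flip_first d).
Proof.
move=> u; apply/ffunP => i; rewrite /flip_first /set_first !ffunE eqxx.
by case: (i =P ord0) => [->|//]; rewrite I_flipK.
Qed.

Lemma flip_first_neq d (u : {ffun 'I_d.+1 -> 'I_3}) :
  cube_vertex u -> flip_first u != u.
Proof.
move=> /forallP/(_ ord0) u0_neq2; apply/eqP => /ffunP/(_ ord0).
by rewrite ffunE eqxx; apply/eqP/I_flip_neq.
Qed.

Lemma cube_vertex_flip_first d (u : {ffun 'I_d.+1 -> 'I_3}) :
  cube_vertex (flip_first u) = cube_vertex u.
Proof.
apply/forallP/forallP => u_vertex i; have := u_vertex i;
  by rewrite /flip_first /set_first !ffunE; case: (i =P ord0) => [->|//];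
  rewrite I_flip_eq2.
Qed.

Lemma cube_le_vertex d (u b : {ffun 'I_d -> 'I_3}) :
  cube_vertex u -> cube_le b u = (b == u).
Proof.
move=> /forallP u_vertex; apply/forallP/eqP => [b_le_u|->]; last first.
  by move=> i; rewrite /I_le eqxx.
apply/ffunP => i; have := b_le_u i.
by rewrite /I_le (negbTE (u_vertex i)) orbF => /eqP.
Qed.

Lemma cube_le_set_first d (u : {ffun 'I_d.+1 -> 'I_3}) k :
  cube_le (set_first u k) (set_first u ord_max).
Proof.
by apply/forallP => i; rewrite /I_le !ffunE; case: (i == ord0); rewrite ?eqxx ?orbT.
Qed.

Lemma card_cube_edge_ideal d (u : {ffun 'I_d.+1 -> 'I_3}) :
  cube_vertex u -> #|[pred b | cube_le b (set_first u ord_max)]| = 3.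
Proof.
move=> /forallP u_vertex.
suff /eq_card-> : [pred b | cube_le b (set_first u ord_max)] =i
                  image (set_first u) predT.
  by rewrite (card_image (@set_first_inj d u)) card_ord.
move=> b; rewrite !inE; apply/idP/imageP => [/forallP b_le|[k _ ->]]; last first.
  exact: cube_le_set_first.
exists (b ord0) => //; apply/ffunP => i; rewrite ffunE.
case: (i =P ord0) => [->//|/eqP i_neq0]; have := b_le i.
by rewrite /I_le ffunE (negbTE i_neq0) (negbTE (u_vertex i)) orbF => /eqP.
Qed.

Definition cube_param (T : finType) (le : rel T) (y : T) d
    (f : {ffun 'I_d -> 'I_3} -> T) : Prop :=
  [/\ injective f, (forall u, le (f u) y),
      (forall z, le z y -> exists u, f u = z) &
      (forall u w, le (f u) (f w) = cube_le u w)].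

Section CubicalPoset.
Variables (T : finType) (le : rel T).
Hypothesis le_cubical : cubical_poset le.

Lemma cubical_le_refl : reflexive le.
Proof. by case: le_cubical => [[]]. Qed.

Lemma cubical_le_trans : transitive le.
Proof. by case: le_cubical => [[_ []]]. Qed.

Lemma cubical_param y : exists d (f : {ffun 'I_d -> 'I_3} -> T), cube_param le y f.
Proof. by case: le_cubical => _ /(_ y) [d [f f_param]]; exists d, f. Qed.

Section Face.
Variables (y : T) (d : nat) (f : {ffun 'I_d -> 'I_3} -> T).
Hypothesis f_param : cube_param le y f.

Lemma face_dim_param : face_dim le y = d.
Proof.
case: f_param => f_inj f_le f_onto _.
rewrite /face_dim -[d](@trunc_expnK 3) //.
have -> : 3 ^ d = #|{ffun 'I_d -> 'I_3}| by rewrite card_ffun !card_ord.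
congr trunc_log; rewrite -(card_image f_inj); apply: eq_card => z; rewrite inE.
by apply/idP/imageP => [/f_onto [u <-]|[u _ ->//]]; exists u.
Qed.

Lemma card_ideal_param a : #|[pred z | le z (f a)]| = #|[pred b | cube_le b a]|.
Proof.
case: f_param => f_inj f_le f_onto f_mono.
rewrite -(card_image f_inj); apply: eq_card => z; rewrite inE.
apply/idP/imageP => [z_le|[b]]; last by rewrite inE -f_mono => b_le ->.
have [b fb_eq] := f_onto _ (cubical_le_trans z_le (f_le a)).
by subst z; exists b; rewrite // inE -f_mono.
Qed.

End Face.

Lemma param0_le_eq y (f : {ffun 'I_0 -> 'I_3} -> T) z :
  cube_param le y f -> le z y -> z = y.
Proof.
case=> _ _ f_onto _ z_le_y; have [u1 <-] := f_onto _ z_le_y.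
have [u2 <-] := f_onto _ (cubical_le_refl y).
by congr f; apply/ffunP => -[].
Qed.

Lemma vertex_minimal v z : is_vertex le v -> le z v -> z = v.
Proof.
move=> v_vertex; have [d [f f_param]] := cubical_param v.
have d0 : d = 0 by rewrite -(face_dim_param f_param); apply/eqP.
by subst d; apply: param0_le_eq f_param.
Qed.

Lemma is_vertex_param y d (f : {ffun 'I_d -> 'I_3} -> T) u :
  cube_param le y f -> is_vertex le (f u) = cube_vertex u.
Proof.
move=> f_param; have [f_inj _ _ f_mono] := f_param.
apply/idP/idP => [fu_vertex|u_vertex]; last first.
  rewrite /is_vertex /face_dim (card_ideal_param f_param).
  by rewrite (eq_card (fun b => cube_le_vertex b u_vertex)) card1 trunc_log1.
apply/forallP => i; apply/negP => ui_eq2.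
pose w := [ffun j => if j == i then ord0 else u j].
have w_le_u : le (f w) (f u).
  rewrite f_mono; apply/forallP => j; rewrite /I_le ffunE.
  by case: (j =P i) => [->|]; rewrite ?ui_eq2 ?orbT ?eqxx.
move: (vertex_minimal fu_vertex w_le_u) => /f_inj/ffunP/(_ i).
by rewrite ffunE eqxx => ui_eq0; rewrite -ui_eq0 in ui_eq2.
Qed.

Section PositiveFace.
Variables (y : T) (d : nat) (f : {ffun 'I_d.+1 -> 'I_3} -> T).
Hypothesis f_param : cube_param le y f.

Lemma is_edge_param u : cube_vertex u -> is_edge le (f (set_first u ord_max)).
Proof.
move=> u_vertex; rewrite /is_edge /face_dim (card_ideal_param f_param).
by rewrite card_cube_edge_ideal.
Qed.

Lemma card_vertices_below (P : pred T) :
  #|[set v | (is_vertex le v && P v) && (le v y && (y != v))]| =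
  #|[set u | cube_vertex u && P (f u)]|.
Proof.
have [f_inj f_le f_onto _] := f_param.
have y_not_vertex : ~~ is_vertex le y by rewrite /is_vertex (face_dim_param f_param).
rewrite -(card_imset _ f_inj); apply: eq_card => v; rewrite !inE.
apply/idP/imsetP => [/andP[/andP[v_vertex Pv] /andP[v_le_y _]]|[u]].
  have [u fu_eq] := f_onto _ v_le_y; subst v; exists u => //.
  by rewrite inE Pv andbT -(is_vertex_param _ f_param).
rewrite inE -(is_vertex_param _ f_param) => /andP[fu_vertex Pfu] ->.
rewrite fu_vertex Pfu f_le /=; apply: contraNneq y_not_vertex => ->.
exact: fu_vertex.
Qed.

Variable c : T -> bool.
Hypothesis c_bicoloring : bicoloring le c.

Lemma color_flip_first u : cube_vertex u -> c (f (flip_first u)) = ~~ c (f u).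
Proof.
move=> u_vertex; have [f_inj _ _ f_mono] := f_param.
suff : c (f u) != c (f (flip_first u)) by case: (c (f u)); case: (c (f _)).
apply: (c_bicoloring (is_edge_param u_vertex)).
- by rewrite (is_vertex_param _ f_param).
- by rewrite (is_vertex_param _ f_param) cube_vertex_flip_first.
- by rewrite -{1}(set_first_id u) f_mono cube_le_set_first.
- by rewrite f_mono cube_le_set_first.
- by rewrite eq_sym (inj_eq f_inj) flip_first_neq.
Qed.

Lemma cube_vertices_balanced :
  #|[set u | cube_vertex u && c (f u)]| = #|[set u | cube_vertex u && ~~ c (f u)]|.
Proof.
rewrite -(card_preimset _ (can_inj (@flip_firstK d))); apply: eq_card => u.
rewrite !inE cube_vertex_flip_first.
by case u_vertex: (cube_vertex u) => //=; rewrite color_flip_first ?negbK.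
Qed.

End PositiveFace.

Lemma vertices_below_balanced (c : T -> bool) (y : T) : bicoloring le c ->
  #|[set v | (is_vertex le v && c v) && (le v y && (y != v))]| =
  #|[set v | (is_vertex le v && ~~ c v) && (le v y && (y != v))]|.
Proof.
move=> c_bicoloring; have [[|d] [f f_param]] := cubical_param y.
  by rewrite !eq_card0 // => v; rewrite inE;
    case: (boolP (le v y)) => [/(param0_le_eq f_param)->|_]; rewrite ?eqxx !andbF.
rewrite !(card_vertices_below f_param).
exact: (cube_vertices_balanced f_param c_bicoloring).
Qed.

End CubicalPoset.

Lemma sum_link_euler (T : finType) (le : rel T) (P : pred T) :
  (\sum_(v | P v) link_euler le v =
   \sum_y (-1) ^+ (face_dim le y).-1 *+ #|[set v | P v && (le v y && (y != v))]|)%R.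
Proof.
rewrite /link_euler; under eq_bigr => v _ do rewrite big_mkcond.
rewrite exchange_big /=; apply: eq_bigr => y _.
rewrite -big_mkcondr -sumr_const; apply: eq_bigl => v.
by rewrite inE.
Qed.

Theorem theorem2p2 (T : finType) (le : rel T) (n : int) (c : T -> bool) :
  n != 0%R ->
  cubical_complex le ->
  eulerian le n ->
  bicoloring le c ->
  #|[set v | is_vertex le v & c v]| = #|[set v | is_vertex le v & ~~ c v]|.
Proof.
move=> n_neq0 [le_cubical _] le_eulerian c_bicoloring.
have n_times_card (P : pred T) : (forall v, P v -> is_vertex le v) ->
    (n *+ #|[set v | P v]| = \sum_y (-1) ^+ (face_dim le y).-1 *+
                              #|[set v | P v && (le v y && (y != v))]|)%R.
  move=> P_vertex; rewrite -sumr_const -sum_link_euler.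
  by apply: eq_big => v; rewrite inE // => /P_vertex /le_eulerian ->.
apply: (mulrIn n_neq0).
rewrite (n_times_card (fun v => is_vertex le v && c v)); last by move=> v /andP[].
rewrite (n_times_card (fun v => is_vertex le v && ~~ c v)); last by move=> v /andP[].
by apply: eq_bigr => y _; rewrite (vertices_below_balanced le_cubical _ c_bicoloring).
Qed.
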